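(* Let $P=P(M_\bullet)\in\mathcal{MV}^\sigma$ and $\hat P=\Phi(P)=\hat P(\hat M_\bullet)$. Then for every $i\in\hat I$, $$c_i(\hat P)=c_i(P),$$ where $c_i(\hat P)=\hat M_{\hat\varpi_i}-\hat M_{\hat s_i\hat\varpi_i}-1$ and $c_i(P)=M_{\varpi_i}-M_{s_i\varpi_i}-1$.
   Context: Setting. $\mathfrak{g}$ is a simply-laced simple Lie algebra of type $A_{2l-1}$ ($l\ge2$), $D_{l+1}$ ($l\ge3$), $D_4$ or $E_6$. $\sigma$ is a nontrivial Dynkin diagram automorphism, i.e. a permutation of $I$ with $c_{\sigma(i)\sigma(j)}=c_{ij}$: - for $A_{2l-1}$: the flip $i\leftrightarrow 2l-i$; - for $D_{l+1}$: the swap of the two short-branch end nodes; - for $D_4$: the order-3 rotation of the three outer nodes; - for $E_6$: the flip. The fixed subalgebra $\hat{\mathfrak g}=\mathfrak g^\sigma$ is simple of type $C_l$, $B_l$, $G_2$, $F_4$ respectively. Its index set $\hat I$ is identified with a set of representatives of the $\sigma$-orbits in $I$. Its Weyl group is $\hat W$, with simple reflections $\hat s_i$, fundamental weights $\hat\varpi_i$, chamber weights $\hat\Gamma=\{\hat w\hat\varpi_i\}$, and coroots $\hat h_i=\sum_t h_{\sigma^t(i)}$. There is an isomorphism $\Theta:\hat W\to W^\sigma$ with $\Theta(\hat s_i)=\prod_{t=0}^{k_i-1}s_{\sigma^t(i)}$, where $k_i$ is the size of the orbit of $i$. MV polytopes. For each Lie algebra, MV polytopes $P(M_\bullet)$ are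 pseudo-Weyl polytopes $\{h:\langle h,\gamma\rangle\ge M_\gamma\ \forall\gamma\}$ whose integer data $M_\bullet$, indexed by chamber weights, satisfy Kamnitzer's edge inequalities and tropical Plücker relations. The GGMS datum $(\mu_w)$ is defined by $\langle\mu_w,w\varpi_i\rangle=M_{w\varpi_i}$. $\mathcal{MV}^\sigma$ is the set of MV polytopes for $\mathfrak g$ with $M_\gamma=M_{\sigma(\gamma)}$ for all $\gamma$. $\Phi:\mathcal{MV}^\sigma\to\hat{\mathcal{MV}}$ sends $P$ with GGMS datum $\mu_\bullet$ to the MV polytope $\hat P$ for $\hat{\mathfrak g}$ with GGMS datum $\hat\mu_{\hat w}=\mu_{\Theta(\hat w)}$. $\hat M_\bullet$ denotes the BZ datum of $\hat P$. *)

From HB Require Import structures.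
From mathcomp Require Import all_boot all_order all_algebra.
Set Implicit Arguments.
Unset Strict Implicit.
Unset Printing Implicit Defensive.
Import Order.TTheory GRing.Theory Num.Theory.

(*   FA l  : A_{2l-1} (l >= 2) with the flip             -> C_l            *)
(*   FD l  : D_{l+1} (l >= 3) with the swap of the two    -> B_l            *)
(*           short-branch end nodes                                         *)
(*   FD4   : D_4 with the order-3 rotation of outer nodes -> G_2            *)
(*   FE6   : E_6 with the flip                            -> F_4            *)
(* Nodes are labelled 0 .. rank-1.                                          *)
Inductive fold_type := FA of nat | FD of nat | FD4 | FE6.

Definition valid (d : fold_type) : bool :=
  match d with FA l => (2 <= l)%N | FD l => (3 <= l)%N | _ => true end.

(* rank minus one *)
Definition rkm (d : fold_type) : nat :=
  match d with FA l => (2 * l - 2)%N | FD l => l | FD4 => 3 | FE6 => 5 end.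

Definition adjD (l i j : nat) : bool :=
  [|| (i.+1 == j) && (j <= l.-1), (j.+1 == i) && (i <= l.-1),
      (i == l.-2) && (j == l) | (j == l.-2) && (i == l)]%N.

Definition adj (d : fold_type) (i j : nat) : bool :=
  match d with
  | FA l => (i.+1 == j) || (j.+1 == i)
  | FD l => adjD l i j      (* chain 0-...-(l-1), plus edge (l-2)-l *)
  | FD4 => adjD 3 i j       (* center 1, outer nodes 0,2,3 *)
  | FE6 => (i, j) \in [:: (0, 2); (2, 0); (2, 3); (3, 2); (3, 4); (4, 3);
                         (4, 5); (5, 4); (1, 3); (3, 1)]%N
  end.

Definition sigma_nat (d : fold_type) (i : nat) : nat :=
  match d with
  | FA l => (2 * l - 2 - i)%N
  | FD l => if i == l.-1 then l else if i == l then l.-1 else i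
  | FD4 => if i == 0%N then 2%N else if i == 2%N then 3%N
           else if i == 3%N then 0%N else i
  | FE6 => if i == 0%N then 5%N else if i == 5%N then 0%N
           else if i == 2%N then 4%N else if i == 4%N then 2%N else i
  end.

Definition Ig (d : fold_type) := 'I_(rkm d).+1.

Definition sigma (d : fold_type) (i : Ig d) : Ig d := inord (sigma_nat d i).

(* Cartan matrix of g, c_ij = <h_i, alpha_j> (symmetric) *)
Definition cartan (d : fold_type) (i j : Ig d) : int :=
  if i == j then 2%R else if adj d i j then (-1)%R else 0%R.

(* weights: coordinates lambda_j = <h_j, lambda> (basis of fundamental
   weights); coweights: coordinates mu_j w.r.t. the coroots h_j, so that
   <mu, lambda> = \sum_j mu_j lambda_j. *)
Definition wt (d : fold_type) := {ffun Ig d -> int}.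

Definition fund (d : fold_type) (i : Ig d) : wt d :=
  [ffun j => if i == j then 1%R else 0%R].

(* simple reflection s_i lambda = lambda - <h_i,lambda> alpha_i,
   with <h_j, alpha_i> = c_ji *)
Definition refl (d : fold_type) (i : Ig d) (la : wt d) : wt d :=
  [ffun j => (la j - la i * cartan j i)%R].

(* a word [:: i1; ...; ik] stands for s_i1 ... s_ik *)
Definition act (d : fold_type) (w : seq (Ig d)) (la : wt d) : wt d :=
  foldr (@refl d) la w.

Definition pair (d : fold_type) (mu la : wt d) : int :=
  (\sum_j mu j * la j)%R.

Definition chamber (d : fold_type) (ga : wt d) : Prop :=
  exists (w : seq (Ig d)) (i : Ig d), ga = act w (fund i).

(* action of sigma on weights: sigma(varpi_i) = varpi_{sigma i} *)
Definition sigw (d : fold_type) (la : wt d) : wt d :=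
  [ffun j => la (finv (@sigma d) j)].

Definition wequiv (d : fold_type) (u v : seq (Ig d)) : Prop :=
  forall la : wt d, act u la = act v la.

Definition wlen (d : fold_type) (u : seq (Ig d)) (n : nat) : Prop :=
  (exists v, size v = n /\ wequiv u v) /\ (forall v, wequiv u v -> (n <= size v)%N).

(* u < v : l(u) < l(v) (used only for v = u s_i, where it is the Bruhat order) *)
Definition wlt (d : fold_type) (u v : seq (Ig d)) : Prop :=
  exists m n, wlen u m /\ wlen v n /\ (m < n)%N.

(* M is a collection of integers indexed by chamber weights; only its
   values on chamber weights are relevant. *)
Definition edge_ineq (d : fold_type) (M : wt d -> int) : Prop :=
  forall (w : seq (Ig d)) (i : Ig d),
    (M (act w (fund i)) + M (act (rcons w i) (fund i))
     + \sum_(j | j != i) cartan j i * M (act w (fund j)) <= 0)%R.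

(* tropical Plücker relations (simply-laced: only a_ij = a_ji = -1) *)
Definition trop_plucker (d : fold_type) (M : wt d -> int) : Prop :=
  forall (w : seq (Ig d)) (i j : Ig d), i != j -> cartan i j = (-1)%R ->
    wlt w (rcons w i) -> wlt w (rcons w j) ->
    (M (act (rcons w i) (fund i)) + M (act (rcons w j) (fund j))
     = Num.min (M (act w (fund i)) + M (act (rcons (rcons w i) j) (fund j)))
               (M (act (rcons (rcons w j) i) (fund i)) + M (act w (fund j))))%R.

Definition BZ_datum (d : fold_type) (M : wt d -> int) : Prop :=
  edge_ineq M /\ trop_plucker M.

Definition MV_sigma (d : fold_type) (M : wt d -> int) : Prop :=
  BZ_datum M /\ (forall ga, chamber ga -> M ga = M (sigw ga)).

Definition GGMS (d : fold_type) (M : wt d -> int) (w : seq (Ig d)) (mu : wt d) :=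
  forall k : Ig d, pair mu (act w (fund k)) = M (act w (fund k)).

(* Ihat = a set of representatives of the sigma-orbits (the least element
   of each orbit). *)
Definition is_rep (d : fold_type) (i : Ig d) : bool := froot (@sigma d) i == i.

Definition Ih (d : fold_type) := {i : Ig d | is_rep i}.

Definition korb (d : fold_type) (i : Ig d) : nat := order (@sigma d) i.

(* weights of ghat: coordinates lambda_j = <hat h_j, lambda>;
   coweights of ghat: coordinates w.r.t. hat h_j = \sum_t h_{sigma^t j} *)
Definition wth (d : fold_type) := {ffun Ih d -> int}.

(* Cartan matrix of ghat: <hat h_j, hat alpha_i>, with hat alpha_i the
   restriction of alpha_i to h^sigma *)
Definition hcartan (d : fold_type) (j i : Ih d) : int :=
  (\sum_(s < korb (val j)) cartan (iter s (@sigma d) (val j)) (val i))%R.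

Definition hfund (d : fold_type) (i : Ih d) : wth d :=
  [ffun j => if i == j then 1%R else 0%R].

Definition hrefl (d : fold_type) (i : Ih d) (la : wth d) : wth d :=
  [ffun j => (la j - la i * hcartan j i)%R].

Definition hact (d : fold_type) (w : seq (Ih d)) (la : wth d) : wth d :=
  foldr (@hrefl d) la w.

Definition hpair (d : fold_type) (mu la : wth d) : int :=
  (\sum_j mu j * la j)%R.

(* Theta(hat s_i) = s_i s_{sigma i} ... s_{sigma^{k_i - 1} i}, on words *)
Definition Theta (d : fold_type) (w : seq (Ih d)) : seq (Ig d) :=
  flatten [seq [seq iter s (@sigma d) (val i) | s <- iota 0 (korb (val i))]
          | i <- w].

(* a sigma-invariant coweight of g, seen as a coweight of ghat:
   mu = \sum_j mu_j hat h_j *)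
Definition Phi_cow (d : fold_type) (mu : wt d) : wth d := [ffun j => mu (val j)].

(* Mh is the BZ datum of Phi(P): hat mu_w = mu_{Theta(w)} and
   Mh_{w hat varpi_j} = <hat mu_w, w hat varpi_j> *)
Definition BZ_of_Phi (d : fold_type) (M : wt d -> int) (Mh : wth d -> int) : Prop :=
  forall (w : seq (Ih d)) (mu : wt d), GGMS M (Theta w) mu ->
    forall j : Ih d, Mh (hact w (hfund j)) = hpair (Phi_cow mu) (hact w (hfund j)).

Definition c_g (d : fold_type) (M : wt d -> int) (i : Ig d) : int :=
  (M (fund i) - M (act [:: i] (fund i)) - 1)%R.

Definition c_h (d : fold_type) (Mh : wth d -> int) (i : Ih d) : int :=
  (Mh (hfund i) - Mh (hact [:: i] (hfund i)) - 1)%R.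

From mathcomp Require Import all_boot all_order all_algebra zify ring.
Set Implicit Arguments.
Unset Strict Implicit.
Unset Printing Implicit Defensive.
Import GRing.Theory.
Local Open Scope ring_scope.

(* The nodes of a sigma-orbit L are pairwise orthogonal, so Theta(s^_i) is the
   commuting product s_L of the s_a, a in L: it fixes varpi_k for k outside L
   and acts as s_k on varpi_k for k in L.  Since c_kk = 2, the GGMS conditions
   at s_L can be solved explicitly for a coweight mu.  Pairing mu with
   s^_i varpi^_i and summing the folded Cartan entries over orbits gives
   -mu_i - sum_(x notin L) c_xi M_(varpi_x), where sigma-invariance of M turns
   mu at orbit representatives into M_(varpi_x); by the definition of mu this is
   M_(s_i varpi_i).  At the identity chamber both data are just M_(varpi_k). *)

Lemma traject_iota (T : Type) (f : T -> T) x n :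
  traject f x n = [seq iter s f x | s <- iota 0 n].
Proof.
elim: n x => //= n IH x; rewrite IH -[in RHS](addn0 1%N) iotaDl -map_comp.
by congr (_ :: _); apply: eq_map => s /=; rewrite -iterSr.
Qed.

Section DiagramAutomorphism.
Variable d : fold_type.
Hypothesis valid_d : valid d.

Lemma sigma_nat_bound a : (a <= rkm d)%N -> (sigma_nat d a <= rkm d)%N.
Proof.
case: d valid_d a => [l|l||] /= Hv a Ha.
- lia.
- case: eqP => _; first lia. case: eqP => _; lia.
- do 4 (case: a Ha => [|a] Ha //).
- do 6 (case: a Ha => [|a] Ha //).
Qed.

Lemma sigma_nat_order2_or_3 :
  (forall a, (a <= rkm d)%N -> sigma_nat d (sigma_nat d a) = a) \/
  (forall a, (a <= rkm d)%N -> sigma_nat d (sigma_nat d (sigma_nat d a)) = a).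
Proof.
case: d valid_d => [l|l||] /= Hv; [left|left|right|left] => a Ha.
- lia.
- repeat (case: eqP => /=; try lia).
- do 4 (case: a Ha => [|a] Ha //).
- do 6 (case: a Ha => [|a] Ha //).
Qed.

Lemma iter_sigma_nat_mem n a : (a <= rkm d)%N ->
  iter n (sigma_nat d) a \in [:: a; sigma_nat d a; sigma_nat d (sigma_nat d a)].
Proof.
move=> Ha; elim: n => [|n IH] /=; first by rewrite inE eqxx.
have Hb := sigma_nat_bound Ha.
case: sigma_nat_order2_or_3 => H; rewrite !inE in IH *;
  case/or3P: IH => /eqP ->; rewrite ?H ?eqxx ?orbT //.
Qed.

Lemma sigma_nat_nadj a : (a <= rkm d)%N -> sigma_nat d a != a ->
  ~~ adj d a (sigma_nat d a).
Proof.
case: d valid_d a => [l|l||] /= Hv a Ha.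
- move=> H; apply/negP => H2; lia.
- case: (eqVneq a l.-1) => [->|n1]; last case: (eqVneq a l) => [->|n2]; last by rewrite eqxx.
  1,2: by move=> _; rewrite /adjD; apply/negP => H; lia.
- do 4 (case: a Ha => [|a] Ha //).
- do 6 (case: a Ha => [|a] Ha //).
Qed.

Lemma sigma_nat2_nadj a : (a <= rkm d)%N -> sigma_nat d (sigma_nat d a) != a ->
  ~~ adj d a (sigma_nat d (sigma_nat d a)).
Proof.
case: d valid_d a => [l|l||] /= Hv a Ha.
- by rewrite (_ : (2 * l - 2 - (2 * l - 2 - a) = a)%N) ?eqxx //; lia.
- case: (eqVneq a l.-1) => [->|n1]; last case: (eqVneq a l) => [->|n2].
  + rewrite eqxx (_ : (l == l.-1) = false) ?eqxx //; apply/eqP; lia.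
  + by rewrite eqxx => _; rewrite /adjD; apply/negP => H; lia.
  + by rewrite !(negbTE n1) !(negbTE n2) eqxx.
- do 4 (case: a Ha => [|a] Ha //).
- do 6 (case: a Ha => [|a] Ha //).
Qed.

Lemma sigma_val (a : Ig d) : sigma a = sigma_nat d a :> nat.
Proof. by rewrite /sigma inordK // ltnS sigma_nat_bound // -ltnS. Qed.

Lemma iter_sigma_val n (a : Ig d) : iter n (@sigma d) a = iter n (sigma_nat d) a :> nat.
Proof. by elim: n => //= n IH; rewrite sigma_val IH. Qed.

Lemma sigma_inj : injective (@sigma d).
Proof.
move=> a b /(congr1 val); rewrite /= !sigma_val => E; apply: val_inj => /=.
have Ha : (nat_of_ord a <= rkm d)%N by rewrite -ltnS.
have Hb : (nat_of_ord b <= rkm d)%N by rewrite -ltnS.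
by case: sigma_nat_order2_or_3 => H; rewrite -(H _ Ha) -(H _ Hb) E.
Qed.

Lemma connect_sym_sigma : connect_sym (frel (@sigma d)).
Proof. exact/fconnect_sym/sigma_inj. Qed.

Lemma cartan_fconnect (a b : Ig d) :
  fconnect (@sigma d) a b -> a != b -> cartan a b = 0.
Proof.
move=> /iter_findex <-; set n := findex _ a b => an.
rewrite /cartan (negbTE an); have Ha : (nat_of_ord a <= rkm d)%N by rewrite -ltnS.
have an' : iter n (@sigma d) a != a :> nat by rewrite eq_sym.
move: an'; rewrite iter_sigma_val.
have := iter_sigma_nat_mem n Ha; rewrite !inE => /or3P [] /eqP ->; rewrite ?eqxx // => H.
- by rewrite (negbTE (sigma_nat_nadj Ha H)).
- by rewrite (negbTE (sigma_nat2_nadj Ha H)).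
Qed.

Lemma froot_iter_rep (j : Ih d) s : froot (@sigma d) (iter s (@sigma d) (val j)) = val j.
Proof.
rewrite -[RHS](eqP (valP j)); apply/eqP.
by rewrite eq_sym (root_connect connect_sym_sigma) fconnect_iter.
Qed.

Lemma sum_orbit_iter (r : Ig d) (f : Ig d -> int) : is_rep r ->
  \sum_(s < korb r) f (iter s (@sigma d) r) = \sum_(x | froot (@sigma d) x == r) f x.
Proof.
move=> rep_r; rewrite -(big_mkord xpredT (fun s => f (iter s (@sigma d) r))).
rewrite -(big_map (fun s => iter s (@sigma d) r) xpredT f).
rewrite /index_iota subn0 -traject_iota -/(orbit _ r).
rewrite big_uniq ?orbit_uniq //.
apply: eq_bigl => x; rewrite -fconnect_orbit -(root_connect connect_sym_sigma).
by rewrite (eqP rep_r) eq_sym.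
Qed.

Lemma sum_reps_orbits (f : Ig d -> int) :
  \sum_(j : Ih d) \sum_(s < korb (val j)) f (iter s (@sigma d) (val j)) = \sum_x f x.
Proof.
have -> := esym (big_sub (fun r => is_rep r) (fun r => \sum_(s < korb r) f (iter s (@sigma d) r))).
rewrite [RHS](partition_big (froot (@sigma d)) (fun r => is_rep r)) /=; last first.
  by move=> x _; exact: (roots_root connect_sym_sigma).
by apply: eq_bigr => r rep_r; rewrite sum_orbit_iter.
Qed.

Lemma orbit_orth (r : Ig d) :
  {in orbit (@sigma d) r &, forall a b, a != b -> cartan a b = 0}.
Proof.
move=> a b; rewrite -!fconnect_orbit => ra rb; apply: cartan_fconnect.
by apply: connect_trans rb; rewrite connect_sym_sigma.
Qed.

Lemma sum_hcartan (mu : wt d) (i : Ih d) :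
  \sum_j Phi_cow mu j * hcartan j i = \sum_x mu (froot (@sigma d) x) * cartan x (val i).
Proof.
rewrite -sum_reps_orbits; apply: eq_bigr => j _.
by rewrite ffunE mulr_sumr; apply: eq_bigr => s _; rewrite froot_iter_rep.
Qed.

Lemma sigw_fund (k : Ig d) : sigw (fund k) = fund (sigma k).
Proof.
apply/ffunP => j; rewrite !ffunE; congr (if _ then _ else _).
by apply/eqP/eqP => [->|<-]; rewrite ?f_finv ?finv_f //; exact: sigma_inj.
Qed.

Lemma M_fund_froot (M : wt d -> int) :
  (forall ga, chamber ga -> M ga = M (sigw ga)) ->
  forall x, M (fund (froot (@sigma d) x)) = M (fund x).
Proof.
move=> M_inv x; rewrite -(iter_findex (connect_root _ x)).
elim: (findex _ _ _) => //= n IH.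
by rewrite -sigw_fund -M_inv //; exists [::], (iter n (@sigma d) x).
Qed.

End DiagramAutomorphism.

Lemma Theta_single d (i : Ih d) : Theta [:: i] = orbit (@sigma d) (val i).
Proof. by rewrite /Theta /= cats0 /orbit traject_iota. Qed.

Lemma pair_fund d (mu : wt d) k : pair mu (fund k) = mu k.
Proof.
rewrite /pair (bigD1 k) //= big1 ?addr0 ?ffunE ?eqxx ?mulr1 // => j jk.
by rewrite ffunE eq_sym (negbTE jk) mulr0.
Qed.

Lemma hpair_fund d (mu : wth d) k : hpair mu (hfund k) = mu k.
Proof.
rewrite /hpair (bigD1 k) //= big1 ?addr0 ?ffunE ?eqxx ?mulr1 // => j jk.
by rewrite ffunE eq_sym (negbTE jk) mulr0.
Qed.

Lemma pair_refl_fund d (mu : wt d) k :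
  pair mu (refl k (fund k)) = mu k - \sum_j mu j * cartan j k.
Proof.
rewrite -{1}(pair_fund mu k) /pair -sumrB.
by apply: eq_bigr => j _; rewrite !ffunE eqxx mul1r mulrBr.
Qed.

Lemma hpair_hrefl_fund d (mu : wth d) i :
  hpair mu (hrefl i (hfund i)) = mu i - \sum_j mu j * hcartan j i.
Proof.
rewrite -{1}(hpair_fund mu i) /hpair -sumrB.
by apply: eq_bigr => j _; rewrite !ffunE eqxx mul1r mulrBr.
Qed.

Section OrthogonalWord.
Variables (d : fold_type) (M : wt d -> int) (L : seq (Ig d)).
Hypothesis uniq_L : uniq L.
Hypothesis orth_L : {in L &, forall a b, a != b -> cartan a b = 0}.

Lemma act_orth la : act L la = [ffun j => la j - \sum_(a <- L) la a * cartan j a].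
Proof.
elim: L uniq_L orth_L => [|a L' IH] /=.
  by move=> _ _; apply/ffunP => j; rewrite ffunE big_nil subr0.
case/andP => aL' uL' orth.
rewrite IH //; last by move=> x y xL yL; apply: orth; rewrite inE ?xL ?yL orbT.
apply/ffunP => j; rewrite !ffunE big_cons.
have -> : \sum_(b <- L') la b * cartan a b = 0.
  rewrite big_seq big1 // => b bL; rewrite orth ?mulr0 ?inE ?eqxx ?bL ?orbT //.
  by apply: contraNneq aL' => ->.
by rewrite subr0 opprD addrA addrAC.
Qed.

Lemma act_orth_fund k : act L (fund k) = if k \in L then refl k (fund k) else fund k.
Proof.
rewrite act_orth; apply/ffunP => j; case: ifP => kL; rewrite !ffunE.
- rewrite (bigD1_seq k) //= big1_seq ?addr0 ?ffunE ?eqxx ?mul1r //.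
  by move=> a /andP[ak _]; rewrite ffunE eq_sym (negbTE ak) mul0r.
- rewrite big1_seq ?subr0 // => a /andP[_ aL]; rewrite ffunE.
  by case: eqP => [ka|]; [rewrite ka aL in kL | rewrite mul0r].
Qed.

Lemma sum_cartan_orth (f : Ig d -> int) k : k \in L ->
  \sum_j f j * cartan j k = f k *+ 2 + \sum_(j | j \notin L) f j * cartan j k.
Proof.
move=> kL; rewrite (bigID (fun j => j \in L)) /= (bigD1 k) //= big1 ?addr0.
  by rewrite /cartan eqxx mulr_natr.
by move=> j /andP[jL jk]; rewrite orth_L ?mulr0.
Qed.

(* The value at k in L solves <mu, s_k varpi_k> = M_(s_k varpi_k), i.e.
   -mu_k - sum_(j notin L) mu_j c_jk = M_(s_k varpi_k). *)
Definition orth_ggms : wt d := [ffun k => if k \in L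
  then - M (refl k (fund k)) - \sum_(j | j \notin L) M (fund j) * cartan j k
  else M (fund k)].

Lemma GGMS_orth_ggms : GGMS M L orth_ggms.
Proof.
move=> k; rewrite act_orth_fund; case: ifP => kL; last by rewrite pair_fund ffunE kL.
rewrite pair_refl_fund sum_cartan_orth //.
under eq_bigr => j jL do rewrite ffunE (negbTE jL).
rewrite ffunE kL; ring.
Qed.

End OrthogonalWord.

Lemma hpair_orbit_ggms d (M : wt d -> int) (i : Ih d) : valid d ->
  (forall ga, chamber ga -> M ga = M (sigw ga)) ->
  hpair (Phi_cow (orth_ggms M (orbit (@sigma d) (val i)))) (hrefl i (hfund i))
  = M (refl (val i) (fund (val i))).
Proof.
move=> valid_d M_inv; set r := val i; set L := orbit (@sigma d) r.
set mu := orth_ggms M L.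
have rL : r \in L := in_orbit _ r.
have root_r : froot (@sigma d) r = r := eqP (valP i).
have mu_root x : x \notin L -> mu (froot (@sigma d) x) = M (fund x).
  move=> xL; rewrite ffunE ifN ?M_fund_froot //; apply: contra xL.
  rewrite -!fconnect_orbit => /connect_trans; apply.
  by rewrite connect_sym_sigma // connect_root.
rewrite hpair_hrefl_fund (sum_hcartan valid_d) -/r.
rewrite (sum_cartan_orth (orbit_orth valid_d (r:=r)) (fun x => mu (froot _ x))) // root_r.
under eq_bigr => x xL do rewrite mu_root //.
rewrite ffunE; change (sval i) with r.
by rewrite /mu ffunE rL; ring.
Qed.

Theorem lemma6p4 (d : fold_type) (Hd : valid d) (M : wt d -> int)
  (HM : MV_sigma M) (Mh : wth d -> int) (HMh : BZ_of_Phi M Mh) (i : Ih d) :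
  c_h Mh i = c_g M (val i).
Proof.
case: HM => _ M_inv.
have ggms_id : GGMS M (Theta [::]) [ffun k => M (fund k)].
  by move=> k; rewrite pair_fund ffunE.
have ggms_i : GGMS M (Theta [:: i]) (orth_ggms M (orbit (@sigma d) (val i))).
  by rewrite Theta_single; apply: GGMS_orth_ggms; [exact: orbit_uniq | exact: orbit_orth].
rewrite /c_h /c_g (HMh _ _ ggms_id) (HMh _ _ ggms_i) /= hpair_fund !ffunE.
by rewrite hpair_orbit_ggms.
Qed.
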